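(* Let $R$ be a nontrivial locally finite commutative ring, $\Sigma$ an alphabet, $L\in\mathrm{RevL}(R,\Sigma)$ a language, and $M_L$ the syntactic monoid of $L$. Then the idempotents of $M_L$ commute, i.e., $M_L\in\mathbf{ECom}$.
   Context: A ring is a semiring $(R,+,\cdot,0,1)$ whose additive monoid is an abelian group; nontrivial means $0\neq1$; it is locally finite if every subsemiring generated by a finite subset is finite. For a semiring $S$ and finite nonempty alphabet $\Sigma$, a series is a map $r\colon\Sigma^*\to S$ with value $(r,w)$ and support $\mathrm{supp}(r)=\{w\mid(r,w)\neq0\}$. A weighted automaton over $S$ and $\Sigma$ is $\mathcal{A}=(Q,\sigma,\iota,\tau)$ with $Q$ finite, $\sigma\colon Q\times\Sigma\times Q\to S$, $\iota,\tau\colon Q\to S$; a run on $w=a_1\cdots a_t$ is $q_0a_1q_1\cdots a_tq_t$ with all $\sigma(q_{k-1},a_k,q_k)\neq0$, of weight $\iota(q_0)\sigma(q_0,a_1,q_1)\cdots\sigma(q_{t-1},a_t,q_t)\tau(q_t)$, and $(\|\mathcal{A}\|,w)$ is the sum of weights of all runs on $w$. $\mathcal{A}$ is reversible if for all $p,p',q,q'\in Q$, $a\in\Sigma$: $\sigma(p,a,q)\neq0\neq\sigma(p,a,q')$ implies $q=q'$, and $\sigma(p,a,q)\neq0\neq\sigma(p',a,q)$ implies $p=p'$. $\mathrm{RevL}(S,\Sigma)$ is the set of supports of series realised by reversible weighted automata over $S$ and $\Sigma$. The syntactic monoid $M_L$ is $\Sigma^*/\!\sim_L$ with $u\sim_L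 v$ iff $xuy\in L\Leftrightarrow xvy\in L$ for all $x,y\in\Sigma^*$. $\mathbf{ECom}$ is the pseudovariety of finite monoids whose idempotents commute. *)

From HB Require Import structures.
From mathcomp Require Import all_boot all_algebra.
Set Implicit Arguments. Unset Strict Implicit. Unset Printing Implicit Defensive.
Import GRing.Theory.
Local Open Scope ring_scope.

Inductive gen_semiring (R : comNzRingType) (A : seq R) : R -> Prop :=
  | gs_mem x : x \in A -> gen_semiring A x
  | gs_zero : gen_semiring A 0
  | gs_one : gen_semiring A 1
  | gs_add x y : gen_semiring A x -> gen_semiring A y -> gen_semiring A (x + y)
  | gs_mul x y : gen_semiring A x -> gen_semiring A y -> gen_semiring A (x * y).

Definition locally_finite (R : comNzRingType) : Prop :=
  forall A : seq R, exists s : seq R, forall x, gen_semiring A x -> x \in s.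

Section Automata.
Variables (R : comNzRingType) (Sigma : finType) (Q : finType).
Variable sigma : Q -> Sigma -> Q -> R.
Variables iota tau : Q -> R.

Definition trans_weight (w : seq Sigma) (qs : {ffun 'I_(size w).+1 -> Q})
  (k : 'I_(size w)) : R :=
  sigma (qs (widen_ord (leqnSn _) k)) (tnth (in_tuple w) k) (qs (lift ord0 k)).

Definition is_run (w : seq Sigma) (qs : {ffun 'I_(size w).+1 -> Q}) : bool :=
  [forall k, trans_weight qs k != 0].

Definition run_weight (w : seq Sigma) (qs : {ffun 'I_(size w).+1 -> Q}) : R :=
  iota (qs ord0) * (\prod_(k < size w) trans_weight qs k) * tau (qs ord_max).

Definition behaviour (w : seq Sigma) : R :=
  \sum_(qs : {ffun 'I_(size w).+1 -> Q} | is_run qs) run_weight qs.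

Definition reversible : Prop :=
  (forall p q q' a, sigma p a q != 0 -> sigma p a q' != 0 -> q = q') /\
  (forall p p' q a, sigma p a q != 0 -> sigma p' a q != 0 -> p = p').
End Automata.

Definition RevL (R : comNzRingType) (Sigma : finType) (L : seq Sigma -> Prop) : Prop :=
  exists (Q : finType) (sigma : Q -> Sigma -> Q -> R) (iota tau : Q -> R),
    reversible sigma /\ forall w, L w <-> behaviour sigma iota tau w != 0.

(* Syntactic congruence ~_L ; elements of M_L are its classes, with
   product induced by concatenation. *)
Definition synt_equiv (Sigma : Type) (L : seq Sigma -> Prop) (u v : seq Sigma) : Prop :=
  forall x y, L (x ++ u ++ y) <-> L (x ++ v ++ y).

Definition synt_monoid_finite (Sigma : eqType) (L : seq Sigma -> Prop) : Prop :=
  exists s : seq (seq Sigma), forall u, exists2 v, v \in s & synt_equiv L u v.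

Definition synt_idempotents_commute (Sigma : Type) (L : seq Sigma -> Prop) : Prop :=
  forall e f, synt_equiv L (e ++ e) e -> synt_equiv L (f ++ f) f ->
    synt_equiv L (e ++ f) (f ++ e).

Definition synt_monoid_in_ECom (Sigma : eqType) (L : seq Sigma -> Prop) : Prop :=
  synt_monoid_finite L /\ synt_idempotents_commute L.

From mathcomp Require Import all_boot all_algebra zify.
From Stdlib Require Import Classical.
Set Implicit Arguments. Unset Strict Implicit. Unset Printing Implicit Defensive.
Import GRing.Theory.
Local Open Scope ring_scope.

(** Numbering the states, a weighted automaton turns each word [w] into the
    product [T(w)] of its letter matrices, a monoid morphism into square
    matrices over [R] that recognises [L]: the behaviour on [x u y] is
    [iota T(x) T(u) T(y) tau].  All entries of all [T(w)] lie in the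
    subsemiring generated by the finitely many transition weights, which is
    finite by local finiteness; so the image of [T] is finite and the
    syntactic monoid, a quotient of it, is finite as well.  Reversibility
    says that every letter matrix, hence every [T(w)], has at most one nonzero
    entry in each row and each column, and such a matrix can only be
    idempotent if it is diagonal.  An idempotent class [e] of the syntactic
    monoid contains a power [e^n] whose matrix is idempotent (some power of
    every element of a finite monoid is), hence diagonal, and diagonal
    matrices over a commutative ring commute. *)

Section ExprPeriod.
Variable M : pzSemiRingType.

Lemma expr_period (x : M) a d n t :
  x ^+ a = x ^+ (a + d) -> (a <= n)%N -> x ^+ (n + t * d) = x ^+ n.
Proof.
move=> xad le_an; elim: t => [|t IHt]; first by rewrite addn0.
have -> : (n + t.+1 * d = (n - a) + (a + d) + t * d)%N by rewrite mulSn; lia.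
by rewrite exprD (exprD x (n - a)) -xad -exprD subnK // -exprD IHt.
Qed.

Lemma exists_idempotent_expr (x : M) (S : seq M) :
  (forall n, x ^+ n.+1 \in S) -> exists2 m, (0 < m)%N & x ^+ m * x ^+ m = x ^+ m.
Proof.
move=> xS; pose s := [seq x ^+ n.+1 | n <- iota 0 (size S).+1].
have /(uniqPn 0)[i [j [lt_ij lt_js]]] : ~~ uniq s.
  apply: contraT => /negbNE /uniq_leq_size le_sS.
  have : (size s <= size S)%N by apply: (le_sS S) => _ /mapP[n _ ->].
  by rewrite size_map size_iota ltnn.
rewrite size_map size_iota in lt_js.
rewrite !(nth_map 0%N) ?size_iota ?(ltn_trans lt_ij) // !nth_iota ?(ltn_trans lt_ij) //.
rewrite !add0n => eq_ij.
have xad : x ^+ i.+1 = x ^+ (i.+1 + (j - i)) by rewrite addSn subnKC 1?ltnW.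
(* From x^(i+1) = x^(j+1) the powers beyond i+1 have period j - i; take a
   multiple of the period beyond i+1. *)
exists (i.+1 * (j - i))%N; first by rewrite muln_gt0 subn_gt0 lt_ij.
by rewrite -exprD (expr_period _ xad) // leq_pmulr // subn_gt0.
Qed.

End ExprPeriod.

Lemma finite_image_reps (A B : eqType) (g : A -> B) (S : seq B) :
  (forall u, g u \in S) -> exists s : seq A, forall u, exists2 v, v \in s & g v = g u.
Proof.
suff [s sS] : exists s : seq A, forall u, g u \in S -> exists2 v, v \in s & g v = g u.
  by move=> gS; exists s => u; apply: sS.
elim: S => [|b S [s sS]]; first by exists [::].
have [[u0 gu0]|no_b] := classic (exists u0, g u0 = b).
  exists (u0 :: s) => u; rewrite inE => /predU1P[->|/sS[v vs gv]].
    by exists u0; rewrite ?mem_head.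
  by exists v; rewrite // inE vs orbT.
exists s => u; rewrite inE => /predU1P[gu|]; last exact: sS.
by case: no_b; exists u.
Qed.

Section SyntacticCongruence.
Variables (Sigma : Type) (L : seq Sigma -> Prop).

Lemma synt_equiv_refl u : synt_equiv L u u.
Proof. by []. Qed.

Lemma synt_equiv_sym u v : synt_equiv L u v -> synt_equiv L v u.
Proof. by move=> uv x y; split => /uv. Qed.

Lemma synt_equiv_trans u v w :
  synt_equiv L u v -> synt_equiv L v w -> synt_equiv L u w.
Proof. by move=> uv vw x y; split => [/uv/vw|/vw/uv]. Qed.

Lemma synt_equiv_cat u u' v v' :
  synt_equiv L u u' -> synt_equiv L v v' -> synt_equiv L (u ++ v) (u' ++ v').
Proof.
move=> uu' vv' x y; have h1 := uu' x (v ++ y); have h2 := vv' (x ++ u') y.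
rewrite -!catA in h1 h2 *; exact: iff_trans h1 h2.
Qed.

Lemma synt_equiv_idem_pow e n :
  synt_equiv L (e ++ e) e -> synt_equiv L (flatten (nseq n.+1 e)) e.
Proof.
move=> idem_e; elim: n => [|n IHn]; first by rewrite /= cats0.
exact: synt_equiv_trans (synt_equiv_cat (synt_equiv_refl e) IHn) idem_e.
Qed.

End SyntacticCongruence.

Section Recognition.
Variables (Sigma : eqType) (L : seq Sigma -> Prop) (M : pzSemiRingType).
Variables (phi : seq Sigma -> M) (S : seq M).
Hypothesis phi_cat : {morph phi : u v / u ++ v >-> u * v}.
Hypothesis phi_synt : forall u v, phi u = phi v -> synt_equiv L u v.
Hypothesis phiS : forall u, phi u \in S.
Hypothesis phi_idem_comm : forall u v,
  phi u * phi u = phi u -> phi v * phi v = phi v -> phi u * phi v = phi v * phi u.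

Lemma morph_word_pow e n : phi (flatten (nseq n.+1 e)) = phi e ^+ n.+1.
Proof.
elim: n => [|n IHn]; first by rewrite /= cats0.
by rewrite -[n.+2]/(1 + n.+1)%N nseqD flatten_cat phi_cat IHn /= cats0 -exprS.
Qed.

Lemma exists_idempotent_word_pow e :
  exists n, phi (flatten (nseq n.+1 e)) * phi (flatten (nseq n.+1 e)) =
            phi (flatten (nseq n.+1 e)).
Proof.
have phiS_pow n : phi e ^+ n.+1 \in S by rewrite -morph_word_pow.
have [[|m] // _ idem] := exists_idempotent_expr phiS_pow.
by exists m; rewrite morph_word_pow.
Qed.

Lemma recognized_synt_monoid_in_ECom : synt_monoid_in_ECom L.
Proof.
split.
  have [s reps] := finite_image_reps phiS.
  exists s => u; have [v vs phi_vu] := reps u.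
  by exists v => //; apply: phi_synt.
move=> e f idem_e idem_f.
have [m idem_em] := exists_idempotent_word_pow e; have [k idem_fk] := exists_idempotent_word_pow f.
move: (synt_equiv_idem_pow m idem_e) (synt_equiv_idem_pow k idem_f) idem_em idem_fk.
set em := flatten _; set fk := flatten _ => em_e fk_f idem_em idem_fk.
apply: synt_equiv_trans (synt_equiv_cat (synt_equiv_sym em_e) (synt_equiv_sym fk_f)) _.
apply: synt_equiv_trans (synt_equiv_cat fk_f em_e).
by apply: phi_synt; rewrite (phi_cat em) (phi_cat fk) phi_idem_comm.
Qed.

End Recognition.

Section PartialMonomial.
Variable R : pzSemiRingType.

Definition partial_monomial_mx m n (A : 'M[R]_(m, n)) :=
  (forall i j j', A i j != 0 -> A i j' != 0 -> j = j') /\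
  (forall i i' j, A i j != 0 -> A i' j != 0 -> i = i').

Lemma mulmx_entry_neq0 m n p (A : 'M[R]_(m, n)) (B : 'M_(n, p)) i k :
  (A *m B) i k != 0 -> exists2 j, A i j != 0 & B j k != 0.
Proof.
move=> nzABik; have /existsP[j /andP[]] : [exists j, (A i j != 0) && (B j k != 0)].
  apply: contraNT nzABik => /existsPn none; rewrite mxE big1 // => j _.
  by have /nandP[] := none j => /negPn/eqP->; rewrite ?mul0r ?mulr0.
by exists j.
Qed.

Lemma partial_monomial_mxM m n p (A : 'M[R]_(m, n)) (B : 'M_(n, p)) :
  partial_monomial_mx A -> partial_monomial_mx B -> partial_monomial_mx (A *m B).
Proof.
move=> [rowA colA] [rowB colB]; split.
  move=> i k k' /mulmx_entry_neq0[j Aij Bjk] /mulmx_entry_neq0[j' Aij' Bj'k'].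
  by move: Bj'k'; rewrite -(rowA _ _ _ Aij Aij') => /(rowB _ _ _ Bjk).
move=> i i' k /mulmx_entry_neq0[j Aij Bjk] /mulmx_entry_neq0[j' Ai'j' Bj'k].
by move: Ai'j'; rewrite -(colB _ _ _ Bjk Bj'k) => /(colA _ _ _ Aij).
Qed.

Lemma partial_monomial_mx1 n : partial_monomial_mx (1%:M : 'M[R]_n).
Proof.
have diag1 i j : (1%:M : 'M[R]_n) i j != 0 -> i = j.
  by rewrite mxE; case: (eqVneq i j) => // _; rewrite mulr0n eqxx.
by split=> [i j j' /diag1<- /diag1|i i' j /diag1-> /diag1].
Qed.

Lemma idempotent_partial_monomial_mx_diag n (A : 'M[R]_n) :
  partial_monomial_mx A -> A *m A = A -> is_diag_mx A.
Proof.
move=> [rowA colA] AA; apply/is_diag_mxP => i j ij; apply/eqP.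
apply: contraNT ij => Aij; have := Aij; rewrite -AA => /mulmx_entry_neq0[k Aik Akj].
by move: Akj; rewrite (rowA _ _ _ Aik Aij) => /(colA _ _ _ Aij)->.
Qed.

End PartialMonomial.

Lemma diag_mx_commute (R : comPzSemiRingType) n (A B : 'M[R]_n) :
  is_diag_mx A -> is_diag_mx B -> A *m B = B *m A.
Proof. by move=> /diag_mxP[d ->] /diag_mxP[e ->]; apply: diag_mxC. Qed.

Section FiniteIndex.
Variable T : finType.

Definition ffun_cons n (p : T) (f : {ffun 'I_n -> T}) : {ffun 'I_n.+1 -> T} :=
  [ffun i => if unlift ord0 i is Some j then f j else p].

Lemma ffun_cons0 n p (f : {ffun 'I_n -> T}) : ffun_cons p f ord0 = p.
Proof. by rewrite ffunE unlift_none. Qed.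

Lemma ffun_consS n p (f : {ffun 'I_n -> T}) j : ffun_cons p f (lift ord0 j) = f j.
Proof. by rewrite ffunE liftK. Qed.

Lemma sum_ffunS (V : nmodType) n (g : {ffun 'I_n.+1 -> T} -> V) :
  \sum_qs g qs = \sum_p \sum_(f : {ffun 'I_n -> T}) g (ffun_cons p f).
Proof.
rewrite pair_big /= (reindex (fun x : T * {ffun 'I_n -> T} => ffun_cons x.1 x.2)) //=.
exists (fun qs => (qs ord0, [ffun j => qs (lift ord0 j)])) => [[p f] _|qs _] /=.
  by rewrite ffun_cons0; congr (_, _); apply/ffunP => j; rewrite ffunE ffun_consS.
apply/ffunP => i; case: (unliftP ord0 i) => [j ->|->]; first by rewrite ffun_consS ffunE.
by rewrite ffun_cons0.
Qed.

Lemma sum_enum_val (V : nmodType) (F : T -> V) :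
  \sum_(i < #|T|) F (enum_val i) = \sum_p F p.
Proof. by rewrite -(big_enum_val F); apply: eq_bigl => p; rewrite inE. Qed.

End FiniteIndex.

Section AutomatonMatrices.
Variables (R : comNzRingType) (Sigma Q : finType) (sigma : Q -> Sigma -> Q -> R).

Definition letter_mx (a : Sigma) : 'M[R]_#|Q| :=
  \matrix_(i, j) sigma (enum_val i) a (enum_val j).

Definition word_mx (w : seq Sigma) : 'M[R]_#|Q| := \prod_(a <- w) letter_mx a.

Lemma word_mx_cat : {morph word_mx : u v / u ++ v >-> u * v}.
Proof. by move=> u v; rewrite /word_mx big_cat. Qed.

Lemma word_mx_cons a w : word_mx (a :: w) = letter_mx a *m word_mx w.
Proof. by rewrite /word_mx big_cons. Qed.

Definition row_of_fun (f : Q -> R) : 'rV[R]_#|Q| := \row_i f (enum_val i).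
Definition col_of_fun (f : Q -> R) : 'cV[R]_#|Q| := \col_i f (enum_val i).

Lemma row_of_fun_mul_letter (I : Q -> R) a :
  row_of_fun I *m letter_mx a = \sum_p I p *: row_of_fun (sigma p a).
Proof.
apply/rowP => j; rewrite !mxE summxE -sum_enum_val.
by apply: eq_bigr => i _; rewrite !mxE.
Qed.

Lemma trans_weight_cons0 a w p (f : {ffun 'I_(size w).+1 -> Q}) :
  trans_weight sigma (w := a :: w) (ffun_cons p f) ord0 = sigma p a (f ord0).
Proof.
rewrite /trans_weight (tnth_nth a) /=.
have -> : widen_ord (leqnSn _) (ord0 : 'I_(size w).+1) = ord0 by apply: val_inj.
by rewrite ffun_cons0 ffun_consS.
Qed.

Lemma trans_weight_consS a w p (f : {ffun 'I_(size w).+1 -> Q}) k :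
  trans_weight sigma (w := a :: w) (ffun_cons p f) (lift ord0 k) =
  trans_weight sigma f k.
Proof.
rewrite /trans_weight !(tnth_nth a).
have -> : widen_ord (leqnSn _) (lift ord0 k : 'I_(size w).+1) =
          lift ord0 (widen_ord (leqnSn _) k) by apply: val_inj.
by rewrite !ffun_consS.
Qed.

Lemma path_sum w (I F : Q -> R) :
  \sum_(qs : {ffun 'I_(size w).+1 -> Q})
     I (qs ord0) * (\prod_(k < size w) trans_weight sigma qs k) * F (qs ord_max)
  = (row_of_fun I *m word_mx w *m col_of_fun F) 0 0.
Proof.
elim: w I => [|a w IHw] I.
  rewrite /word_mx big_nil mulmx1 mxE; transitivity (\sum_p I p * F p).
    rewrite sum_ffunS; apply: eq_bigr => p _.
    rewrite (eq_bigr (fun _ => I p * F p)) => [|f _]; last first.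
      by rewrite big_ord0 mulr1 (ord1 ord_max) ffun_cons0.
    by rewrite sumr_const card_ffun card_ord expn0.
  by rewrite -sum_enum_val; apply: eq_bigr => i _; rewrite !mxE.
rewrite sum_ffunS word_mx_cons mulmxA row_of_fun_mul_letter !mulmx_suml summxE.
apply: eq_bigr => p _; rewrite -!scalemxAl mxE -IHw big_distrr /=.
apply: eq_bigr => f _; rewrite big_ord_recl trans_weight_cons0 ffun_cons0.
have -> : (ord_max : 'I_(size w).+2) = lift ord0 ord_max by apply: val_inj.
rewrite ffun_consS !mulrA; congr (_ * _ * _); apply: eq_bigr => k _.
exact: trans_weight_consS.
Qed.

Lemma behaviour_mx iota tau w :
  behaviour sigma iota tau w = (row_of_fun iota *m word_mx w *m col_of_fun tau) 0 0.
Proof.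
rewrite -path_sum /behaviour big_mkcond /=; apply: eq_bigr => qs _.
case: ifP => // /negbT; rewrite negb_forall => /existsP[k /negPn/eqP wk0].
by rewrite (bigD1 k) //= wk0 mul0r mulr0 mul0r.
Qed.

Lemma word_mx_synt_equiv iota tau (L : seq Sigma -> Prop) :
  (forall w, L w <-> behaviour sigma iota tau w != 0) ->
  forall u v, word_mx u = word_mx v -> synt_equiv L u v.
Proof. by move=> Lbeh u v uv x y; rewrite !Lbeh !behaviour_mx !word_mx_cat uv. Qed.

Lemma reversible_letter_mx a : reversible sigma -> partial_monomial_mx (letter_mx a).
Proof.
move=> [det codet]; split=> [i j j'|i i' j]; rewrite !mxE => s1 s2; apply: enum_val_inj.
  exact: det s1 s2.
exact: codet s1 s2.
Qed.

Lemma reversible_word_mx w : reversible sigma -> partial_monomial_mx (word_mx w).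
Proof.
move=> rev; apply: big_ind => [|A B|a _]; first exact: partial_monomial_mx1.
  exact: partial_monomial_mxM.
exact: reversible_letter_mx.
Qed.

Definition transition_weights : seq R := [seq sigma x.1.1 x.1.2 x.2 | x : Q * Sigma * Q].

Lemma word_mx_gen_semiring w i j : gen_semiring transition_weights (word_mx w i j).
Proof.
elim: w i j => [|a w IHw] i j.
  rewrite /word_mx big_nil mxE.
  by case: (eqVneq i j) => _; [rewrite mulr1n; apply: gs_one | rewrite mulr0n; apply: gs_zero].
rewrite word_mx_cons mxE; apply: (big_ind (gen_semiring _)) => [|x y|k _].
- exact: gs_zero.
- exact: gs_add.
apply: gs_mul (IHw k j); apply: gs_mem; rewrite mxE.
by apply/mapP; exists (enum_val i, a, enum_val k); rewrite ?mem_enum.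
Qed.

End AutomatonMatrices.

Lemma finite_mx_over_seq (R : nmodType) m n (s : seq R) :
  exists S : seq 'M[R]_(m, n), forall A : 'M_(m, n), (forall i j, A i j \in s) -> A \in S.
Proof.
(* The extra index [size s] only makes [inord] usable; it is never hit. *)
exists [seq \matrix_(i, j) s`_(f (i, j)) | f : {ffun 'I_m * 'I_n -> 'I_(size s).+1}].
move=> A As; apply/mapP; exists [ffun ij => inord (index (A ij.1 ij.2) s)].
  exact: mem_enum.
by apply/matrixP => i j; rewrite mxE ffunE inordK ?nth_index // ltnS index_size.
Qed.

Theorem lemma3 (R : comNzRingType) (Sigma : finType) (L : seq Sigma -> Prop) :
  locally_finite R -> (0 < #|Sigma|)%N -> RevL R L -> synt_monoid_in_ECom L.
Proof.
move=> lfR _ [Q [sigma [iota [tau [rev Lbeh]]]]].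
have [s gen_s] := lfR (transition_weights sigma).
have [S S_mx] := finite_mx_over_seq #|Q| #|Q| s.
apply: (@recognized_synt_monoid_in_ECom _ _ _ (word_mx sigma) S).
- exact: word_mx_cat.
- exact: word_mx_synt_equiv Lbeh.
- by move=> u; apply: S_mx => i j; apply/gen_s/word_mx_gen_semiring.
move=> u v /(idempotent_partial_monomial_mx_diag (reversible_word_mx u rev)) diag_u.
move=> /(idempotent_partial_monomial_mx_diag (reversible_word_mx v rev)) diag_v.
exact: diag_mx_commute.
Qed.
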